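(* Let $a$ be a smooth, positive, increasing function on $(0,\infty)$ and consider the two-dimensional Robertson–Walker spacetime $ds^2=-dt^2+a^2(t)\,d\chi^2$, with comoving worldlines $\beta_0:\chi=0$, $\beta_1:\chi=\chi_1$, $\beta_2:\chi=\chi_2$. Suppose the events $\beta_0(t_0)$, $\beta_1(t_1)$, $\beta_2(t_2)$ lie on one null geodesic in the past-pointing horismos (past light cone) of $\beta_0(t_0)$. Let the optical coordinates of $\beta_1(t_1)$ and $\beta_2(t_2)$ relative to $\beta_0$ be $(t_0,\delta_1)$ and $(t_0,\delta_2)$, with $\delta_2>\delta_1>0$, and let $\delta_{21}$ be the affine distance coordinate of $\beta_2(t_2)$ in the optical coordinates of $\beta_1$. Then $$\delta_2=\delta_1+\frac{a(t_1)}{a(t_0)}\,\delta_{21}.$$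
   Context: Comoving worldlines $\chi=\text{const}$ are parametrized by $t$, their proper time. Optical coordinates $(\textsc{t},\delta)$ relative to a comoving observer $\beta_j$ ($\chi=\chi_j$): an event $(t,\chi)$ has $\textsc{t}$ equal to the proper time of $\beta_j$ at which the event lies on $\beta_j$'s past light cone, i.e. $\int_t^{\textsc{t}}du/a(u)=|\chi-\chi_j|$, and affine distance $\delta=\mathrm{sgn}(\chi-\chi_j)\int_t^{\textsc{t}}\frac{a(u)}{a(\textsc{t})}\,du$. *)

From Stdlib Require Import Reals.
From Coquelicot Require Import Coquelicot.
Open Scope R_scope.

Definition sgn (x : R) : R :=
  if Rlt_dec 0 x then 1 else if Rlt_dec x 0 then -1 else 0.

Definition smooth_pos (a : R -> R) : Prop :=
  forall (n : nat) (x : R), 0 < x -> ex_derive (Derive_n a n) x.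

(* Optical coordinates (T, delta) of the event (t, chi) relative to the
   comoving observer chi = chij:  t <= T, int_t^T du/a(u) = |chi - chij|,
   delta = sgn(chi - chij) * int_t^T a(u)/a(T) du. *)
Definition optical_coords (a : R -> R) (chij t chi T delta : R) : Prop :=
  0 < t /\ t <= T /\
  RInt (fun u => / a u) t T = Rabs (chi - chij) /\
  delta = sgn (chi - chij) * RInt (fun u => a u / a T) t T.

Definition on_past_null_geodesic (a : R -> R) (t0 : R) (evs : list (R * R)) : Prop :=
  exists s : R, (s = 1 \/ s = -1) /\
    forall e, List.In e evs ->
      0 < fst e /\ fst e <= t0 /\ snd e = s * RInt (fun u => / a u) (fst e) t0.

(* With direction s = 1 forced by delta1 > 0, both chi_i are integrals of 1/a
   from t_i up to t0, so chi2 - chi1 is the integral of 1/a over [t2, t1]; hence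
   beta_1 receives the light from beta_2(t2) exactly at t1, and delta21 is the
   integral of a/a(t1) over [t2, t1].  Splitting the integral of a/a(t0) over
   [t2, t0] at t1 and rescaling the first piece by a(t1)/a(t0) gives the formula. *)
From Stdlib Require Import Reals Lra.
From Coquelicot Require Import Coquelicot.
Open Scope R_scope.

Lemma sgn_pos x : 0 < x -> sgn x = 1.
Proof. intros Hx; unfold sgn; destruct (Rlt_dec 0 x); lra. Qed.

Lemma pos_of_sgn_mul x y : 0 <= y -> 0 < sgn x * y -> 0 < x.
Proof.
  intros Hy Hxy; unfold sgn in Hxy.
  destruct (Rlt_dec 0 x); [lra|]; destruct (Rlt_dec x 0); nra.
Qed.

Section PositiveIntegrand.

Variable f : R -> R.
Hypothesis f_cont : forall x, 0 < x -> continuous f x.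
Hypothesis f_pos : forall x, 0 < x -> 0 < f x.

Lemma ex_RInt_halfline x y : 0 < x -> 0 < y -> ex_RInt f x y.
Proof.
  intros Hx Hy; apply (@ex_RInt_continuous R_CompleteNormedModule).
  intros z Hz; apply f_cont.
  assert (0 < Rmin x y) by (apply Rmin_glb_lt; lra); lra.
Qed.

Lemma RInt_Chasles_halfline x y z : 0 < x -> 0 < y -> 0 < z ->
  RInt f x z = RInt f x y + RInt f y z.
Proof.
  intros Hx Hy Hz.
  rewrite <- (@RInt_Chasles R_CompleteNormedModule f x y z); auto using ex_RInt_halfline.
Qed.

Lemma RInt_gt0_halfline x y : 0 < x -> x < y -> 0 < RInt f x y.
Proof.
  intros Hx Hxy; apply RInt_gt_0; auto.
  - intros z Hz; apply f_pos; lra.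
  - intros z Hz; apply f_cont; lra.
Qed.

Lemma RInt_ge0_halfline x y : 0 < x -> x <= y -> 0 <= RInt f x y.
Proof.
  intros Hx [Hxy | <-].
  - left; exact (RInt_gt0_halfline x y Hx Hxy).
  - rewrite RInt_point; apply Rle_refl.
Qed.

Lemma RInt_le_lower t x y : 0 < x -> x <= y -> 0 < t -> RInt f y t <= RInt f x t.
Proof.
  intros Hx Hxy Ht; rewrite (RInt_Chasles_halfline x y t) by lra.
  pose proof (RInt_ge0_halfline x y Hx Hxy); lra.
Qed.

Lemma RInt_lt_upper t x y : 0 < t -> 0 < x -> x < y -> RInt f t x < RInt f t y.
Proof.
  intros Ht Hx Hxy; rewrite (RInt_Chasles_halfline t x y) by lra.
  pose proof (RInt_gt0_halfline x y Hx Hxy); lra.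
Qed.

Lemma RInt_upper_inj t x y : 0 < t -> 0 < x -> 0 < y ->
  RInt f t x = RInt f t y -> x = y.
Proof.
  intros Ht Hx Hy Heq; destruct (Rtotal_order x y) as [H | [H | H]]; auto.
  - pose proof (RInt_lt_upper t x y Ht Hx H); lra.
  - pose proof (RInt_lt_upper t y x Ht Hy H); lra.
Qed.

End PositiveIntegrand.

Lemma RInt_div_rescale (f : R -> R) c d x y : c <> 0 -> d <> 0 -> ex_RInt f x y ->
  RInt (fun u => f u / c) x y = d / c * RInt (fun u => f u / d) x y.
Proof.
  intros Hc Hd Hf.
  transitivity (RInt (fun u => scal (d / c) (f u / d)) x y).
  { apply RInt_ext; intros u _; unfold scal; simpl; unfold mult; simpl; field; auto. }
  rewrite (@RInt_scal R_CompleteNormedModule).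
  - reflexivity.
  - apply (@ex_RInt_scal R_CompleteNormedModule (fun u => f u) x y (/ d)) in Hf.
    eapply ex_RInt_ext; [|exact Hf]; intros u _; unfold scal; simpl; unfold mult; simpl.
    unfold Rdiv; ring.
Qed.

Section ScaleFactor.

Variable a : R -> R.
Hypothesis a_smooth : smooth_pos a.
Hypothesis a_pos : forall x, 0 < x -> 0 < a x.

Lemma continuous_scale_factor x : 0 < x -> continuous a x.
Proof. intros Hx; apply (@ex_derive_continuous R_AbsRing R_NormedModule), (a_smooth 0%nat x Hx). Qed.

Lemma continuous_inv_scale_factor x : 0 < x -> continuous (fun u : R => / a u) x.
Proof.
  intros Hx; apply (@ex_derive_continuous R_AbsRing R_NormedModule), ex_derive_inv.
  - exact (a_smooth 0%nat x Hx).
  - apply Rgt_not_eq, a_pos, Hx.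
Qed.

Lemma continuous_div_scale_factor c x : 0 < x -> continuous (fun u : R => a u / c) x.
Proof.
  intros Hx; apply (@ex_derive_continuous R_AbsRing R_NormedModule), ex_derive_mult.
  - exact (a_smooth 0%nat x Hx).
  - apply ex_derive_const.
Qed.

Lemma pos_inv_scale_factor x : 0 < x -> 0 < / a x.
Proof. intros Hx; apply Rinv_0_lt_compat, a_pos, Hx. Qed.

Lemma pos_div_scale_factor c : 0 < c -> forall x, 0 < x -> 0 < a x / c.
Proof. intros Hc x Hx; apply Rdiv_lt_0_compat; auto. Qed.

Lemma optical_coords_pos_distance chij t chi T delta :
  optical_coords a chij t chi T delta -> 0 < delta ->
  0 < chi - chij /\ delta = RInt (fun u => a u / a T) t T.
Proof.
  intros [Ht [HtT [_ Hdelta]]] Hpos.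
  assert (HaT : 0 < a T) by (apply a_pos; lra).
  assert (HJ : 0 <= RInt (fun u => a u / a T) t T).
  { apply RInt_ge0_halfline; auto using continuous_div_scale_factor.
    intros; apply pos_div_scale_factor; auto. }
  assert (Hchi : 0 < chi - chij) by (apply (pos_of_sgn_mul _ _ HJ); lra).
  split; [exact Hchi|]; rewrite Hdelta, sgn_pos, Rmult_1_l; auto.
Qed.

Lemma optical_coords_reception chij t chi T T' delta :
  0 < t < T' -> chi - chij = RInt (fun u => / a u) t T' ->
  optical_coords a chij t chi T delta ->
  T = T' /\ delta = RInt (fun u => a u / a T') t T'.
Proof.
  intros HtT' Hchi [Ht [HtT [HI Hdelta]]].
  assert (Hpos : 0 < chi - chij).
  { rewrite Hchi; apply RInt_gt0_halfline; try lra.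
    - exact continuous_inv_scale_factor.
    - exact pos_inv_scale_factor. }
  assert (HT : T = T').
  { apply (RInt_upper_inj (fun u => / a u) continuous_inv_scale_factor pos_inv_scale_factor t);
      try lra.
    rewrite HI, <- Hchi, Rabs_pos_eq; lra. }
  subst T; split; [reflexivity|]; rewrite Hdelta, sgn_pos, Rmult_1_l; auto.
Qed.

End ScaleFactor.

Theorem lemma1 (a : R -> R)
  (Ha_smooth : smooth_pos a)
  (Ha_pos : forall x, 0 < x -> 0 < a x)
  (Ha_incr : forall x y, 0 < x -> x < y -> a x < a y)
  (chi1 chi2 t0 t1 t2 delta1 delta2 T21 delta21 : R)
  (Ht0 : 0 < t0)
  (Hnull : on_past_null_geodesic a t0 ((t0, 0) :: (t1, chi1) :: (t2, chi2) :: nil))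
  (Hopt1 : optical_coords a 0 t1 chi1 t0 delta1)
  (Hopt2 : optical_coords a 0 t2 chi2 t0 delta2)
  (Hd : 0 < delta1 < delta2)
  (Hopt21 : optical_coords a chi1 t2 chi2 T21 delta21) :
  delta2 = delta1 + a t1 / a t0 * delta21.
Proof.
  pose proof (continuous_inv_scale_factor a Ha_smooth Ha_pos) as Hci.
  pose proof (pos_inv_scale_factor a Ha_pos) as Hpi.
  pose proof (continuous_div_scale_factor a Ha_smooth (a t0)) as Hcc.
  pose proof (pos_div_scale_factor a Ha_pos (a t0) (Ha_pos t0 Ht0)) as Hpc.
  destruct Hnull as [s [Hs Hev]].
  destruct (Hev (t1, chi1)) as [Ht1 [Ht10 Ec1]]; [simpl; auto|].
  destruct (Hev (t2, chi2)) as [Ht2 [Ht20 Ec2]]; [simpl; auto|].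
  simpl in Ht1, Ht10, Ec1, Ht2, Ht20, Ec2.
  destruct (optical_coords_pos_distance a Ha_smooth Ha_pos _ _ _ _ _ Hopt1) as [Hc1 Hd1];
    [lra|].
  destruct (optical_coords_pos_distance a Ha_smooth Ha_pos _ _ _ _ _ Hopt2) as [_ Hd2];
    [lra|].
  rewrite Rminus_0_r in Hc1.
  assert (Hs1 : s = 1).
  { pose proof (RInt_ge0_halfline _ Hci Hpi t1 t0 Ht1 Ht10).
    destruct Hs as [Hs | ->]; [exact Hs | lra]. }
  subst s; rewrite Rmult_1_l in Ec1, Ec2.
  assert (Ht21 : t2 < t1).
  { apply Rnot_le_lt; intros Hle.
    pose proof (RInt_le_lower _ Hcc Hpc t0 t1 t2 Ht1 Hle Ht0); lra. }
  assert (Hchi21 : chi2 - chi1 = RInt (fun u => / a u) t2 t1).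
  { rewrite Ec1, Ec2, (RInt_Chasles_halfline _ Hci t2 t1 t0); lra. }
  destruct (optical_coords_reception a Ha_smooth Ha_pos _ _ _ _ _ _
    (conj Ht2 Ht21) Hchi21 Hopt21) as [_ Hd21].
  rewrite Hd2, Hd1, Hd21, (RInt_Chasles_halfline _ Hcc t2 t1 t0) by lra.
  rewrite (RInt_div_rescale _ _ (a t1)); try apply Rgt_not_eq, Ha_pos; auto.
  - ring.
  - apply (ex_RInt_halfline _ (continuous_scale_factor a Ha_smooth)); lra.
Qed.
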